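(* Let $X,Y$ be metrizable vector spaces over $K$ with metrics $d_X,d_Y$. If $d_Y$ is translation invariant and scale bounded on $Y$, then $B_d(X,Y)$ is a vector space under pointwise operations and $d$ is a translation invariant metric on it. Furthermore, if $Y$ is a normed space and $d_Y$ is the metric induced by its norm, then $B_d(X,Y)$ is a normed space with norm $\|F\|_{B_d(X,Y)}=d(F,0)$.
   Context: $K$ is $\mathbb{R}$ or $\mathbb{C}$. For maps $F_1,F_2:X\to Y$, $d(F_1,F_2)=\max\left\{\sup_{x\neq0,x\in X}\frac{d_Y[F_1(x),F_2(x)]}{d_X(x,0)},\ d_Y[F_1(0),F_2(0)]\right\}\in[0,\infty]$, and $B_d(X,Y)$ is the set of maps $F:X\to Y$ with $d(F,0)<\infty$. A translation invariant metric $d_Y$ is scale bounded on $Y$ if for every $\alpha\in K$ there is a positive number $C_\alpha$ with $d_Y(\alpha y,0)\le C_\alpha d_Y(y,0)$ for all $y\in Y$. *)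

From HB Require Import structures.
From mathcomp Require Import all_boot all_order all_algebra.
From mathcomp Require Import complex.
From mathcomp Require Import all_classical all_reals ereal.
Set Implicit Arguments. Unset Strict Implicit. Unset Printing Implicit Defensive.
Import Order.TTheory GRing.Theory Num.Theory.
Local Open Scope ring_scope.
Local Open Scope classical_set_scope.

(* Conventions: metric values are in a real field R : realType.  The scalar
   field K is either R (absolute value Num.norm) or R[i] (modulus Normc.normc);
   absK : K -> R is the absolute value of K. *)

Section Defs.
Variables (R : realType) (K : pzRingType) (absK : K -> R).

Definition is_metric (T : Type) (d : T -> T -> R) : Prop :=
  [/\ (forall x y, 0 <= d x y),
      (forall x y, d x y = 0 <-> x = y),
      (forall x y, d x y = d y x) &
      (forall x y z, d x z <= d x y + d y z)].

Definition transl_inv (V : zmodType) (d : V -> V -> R) : Prop :=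
  forall x y z, d (x + z) (y + z) = d x y.

Definition metric_vector_space (V : lmodType K) (d : V -> V -> R) : Prop :=
  [/\ is_metric d,
      (forall x y (e : R), 0 < e -> exists2 delta : R, 0 < delta &
         forall x' y', d x x' < delta -> d y y' < delta ->
                       d (x + y) (x' + y') < e) &
      (forall (a : K) x (e : R), 0 < e -> exists2 delta : R, 0 < delta &
         forall (a' : K) x', absK (a - a') < delta -> d x x' < delta ->
                       d (a *: x) (a' *: x') < e)].

Definition scale_bounded (V : lmodType K) (d : V -> V -> R) : Prop :=
  forall a : K, exists2 C : R, 0 < C & forall y : V, d (a *: y) 0 <= C * d y 0.

Definition dmap (X Y : lmodType K) (dX : X -> X -> R) (dY : Y -> Y -> R)
  (F1 F2 : X -> Y) : \bar R :=
  Order.max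
    (ereal_sup [set ((dY (F1 x) (F2 x)) / dX x 0)%:E | x in [set x | x != 0]])
    (dY (F1 0) (F2 0))%:E.

Definition Bd (X Y : lmodType K) (dX : X -> X -> R) (dY : Y -> Y -> R) :
  set (X -> Y) := [set F | (dmap dX dY F (fun _ : X => 0%R : Y) < +oo)%E].

Definition is_norm (V : lmodType K) (A : set V) (N : V -> R) : Prop :=
  [/\ (forall x, A x -> 0 <= N x),
      (forall x, A x -> N x = 0 -> x = 0),
      (forall (a : K) x, A x -> N (a *: x) = absK a * N x) &
      (forall x y, A x -> A y -> N (x + y) <= N x + N y)].

Definition theorem10_for : Prop :=
  forall (X Y : lmodType K) (dX : X -> X -> R) (dY : Y -> Y -> R),
  metric_vector_space dX -> metric_vector_space dY ->
  transl_inv dY -> scale_bounded dY ->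
  let B := Bd dX dY in
  let d := dmap dX dY in
  [/\ [/\ B (fun _ : X => 0%R : Y),
      (forall F G, B F -> B G -> B (fun x => F x + G x)) &
      (forall (a : K) F, B F -> B (fun x => a *: F x))],
      [/\ (forall F G, B F -> B G -> d F G \is a fin_num),
          (forall F G, B F -> B G -> (0 <= d F G)%E),
          (forall F G, B F -> B G -> (d F G = 0%E <-> F = G)),
          (forall F G, B F -> B G -> d F G = d G F) &
          (forall F G H, B F -> B G -> B H -> (d F H <= d F G + d G H)%E)],
      (forall F G H, B F -> B G -> B H ->
             d (fun x => F x + H x) (fun x => G x + H x) = d F G) &
      forall NY : Y -> R, is_norm setT NY ->
        (forall y1 y2, dY y1 y2 = NY (y1 - y2)) ->
        is_norm B (fun F => fine (d F (fun _ : X => 0%R : Y)))].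
End Defs.

From HB Require Import structures.
From mathcomp Require Import all_boot all_order all_algebra.
From mathcomp Require Import complex.
From mathcomp Require Import all_classical all_reals ereal.
Set Implicit Arguments. Unset Strict Implicit. Unset Printing Implicit Defensive.
Import Order.TTheory GRing.Theory Num.Theory.
Local Open Scope ring_scope.
Local Open Scope classical_set_scope.

(* Proof: [d F G] is the least [m] with [dY (F 0) (G 0) <= m] and
   [dY (F x) (G x) <= m * dX x 0] for [x != 0].  Hence every pointwise
   inequality between values of [dY] that is additive or homogeneous in [dY]
   transfers to [d]: the triangle inequality and translation invariance of
   [dY] give those of [d] and the closure of [B_d] under sums, scale
   boundedness gives closure under scalars, and for [dY] induced by a norm
   [dY (a *: y) 0 = |a| dY y 0] gives homogeneity of [F |-> d F 0]. *)

Section MapDistance.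
Variables (R : realType) (K : pzRingType).
Variables (X Y : lmodType K) (dX : X -> X -> R) (dY : Y -> Y -> R).
Hypotheses (dX_metric : is_metric dX) (dY_metric : is_metric dY).

Local Notation d := (dmap dX dY).
Local Notation O := (fun _ : X => 0 : Y).

Lemma dX_gt0 x : x != 0 -> 0 < dX x 0.
Proof.
case: dX_metric => ge0 eq0 _ _ x0; rewrite lt_def ge0 andbT.
by apply/eqP => /eq0 /eqP; rewrite (negbTE x0).
Qed.

Lemma dYxx y : dY y y = 0.
Proof. by case: dY_metric => _ eq0 _ _; apply/(eq0 y y). Qed.

Lemma dmap_ge_at0 (F G : X -> Y) : ((dY (F 0) (G 0))%:E <= d F G)%E.
Proof. by rewrite /dmap le_max lexx orbT. Qed.

Lemma dmap_ge_at (F G : X -> Y) x : x != 0 ->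
  ((dY (F x) (G x) / dX x 0)%:E <= d F G)%E.
Proof.
move=> x0; rewrite /dmap le_max; apply/orP; left.
by apply: ereal_sup_ubound; exists x.
Qed.

Lemma dmap_le_ub (F G : X -> Y) (m : R) : dY (F 0) (G 0) <= m ->
  (forall x, x != 0 -> dY (F x) (G x) <= m * dX x 0) -> (d F G <= m%:E)%E.
Proof.
move=> le0 le; rewrite /dmap ge_max lee_fin le0 andbT.
by apply: ge_ereal_sup => _ [x /= x0 <-]; rewrite lee_fin ler_pdivrMr ?dX_gt0 ?le.
Qed.

Lemma dmap_ge0 (F G : X -> Y) : (0 <= d F G)%E.
Proof.
by case: dY_metric => ge0 _ _ _; apply: le_trans (dmap_ge_at0 F G); rewrite lee_fin.
Qed.

Lemma dmap_neqNy (F G : X -> Y) : d F G != -oo%E.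
Proof. by rewrite gt_eqF // (lt_le_trans ltNy0 (dmap_ge0 F G)). Qed.

Lemma dmap_fineK (F G : X -> Y) : (d F G < +oo)%E -> d F G = (fine (d F G))%:E.
Proof. by move=> lt; rewrite fineK // ge0_fin_numE // dmap_ge0. Qed.

Lemma eq_dmap (F G F' G' : X -> Y) :
  (forall x, dY (F x) (G x) = dY (F' x) (G' x)) -> d F G = d F' G'.
Proof.
move=> eqFG; rewrite /dmap eqFG; congr (Order.max (ereal_sup _) _).
by apply/seteqP; split => _ [x x0 <-]; exists x; rewrite ?eqFG.
Qed.

Lemma dmapC (F G : X -> Y) : d F G = d G F.
Proof. by case: dY_metric => _ _ sym _; apply: eq_dmap. Qed.

Lemma dmapxx (F : X -> Y) : d F F = 0%E.
Proof.
apply/le_anti; rewrite dmap_ge0 andbT.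
by apply: dmap_le_ub => [|x _]; rewrite dYxx ?mul0r.
Qed.

Lemma dmap_fin_ge_at0 (F G : X -> Y) m : d F G = m%:E -> dY (F 0) (G 0) <= m.
Proof. by move=> dFG; have := dmap_ge_at0 F G; rewrite dFG lee_fin. Qed.

Lemma dmap_fin_ge_at (F G : X -> Y) m x : d F G = m%:E -> x != 0 ->
  dY (F x) (G x) <= m * dX x 0.
Proof.
by move=> dFG x0; have := dmap_ge_at F G x0; rewrite dFG lee_fin ler_pdivrMr ?dX_gt0.
Qed.

Lemma dmap_eq0 (F G : X -> Y) : d F G = 0%E -> F = G.
Proof.
case: dY_metric => ge0 eq0 _ _ dFG0; apply: funext => x; apply/eq0/le_anti.
rewrite ge0 andbT; have [->|x0] := eqVneq x 0; first exact: dmap_fin_ge_at0 dFG0.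
by rewrite -(mul0r (dX x 0)); apply: dmap_fin_ge_at dFG0 x0.
Qed.

Lemma dmap_le_add (F G F1 G1 F2 G2 : X -> Y) :
  (forall x, dY (F x) (G x) <= dY (F1 x) (G1 x) + dY (F2 x) (G2 x)) ->
  (d F G <= d F1 G1 + d F2 G2)%E.
Proof.
move=> le_pt; have [->|] := eqVneq (d F1 G1) +oo%E.
  by rewrite addye ?leey ?dmap_neqNy.
have [->|] := eqVneq (d F2 G2) +oo%E; first by rewrite addey ?leey ?dmap_neqNy.
rewrite -!ltey => /dmap_fineK d2 /dmap_fineK d1; rewrite d1 d2 -EFinD.
apply: dmap_le_ub => [|x x0].
  by apply: le_trans (le_pt 0) _; rewrite lerD ?(dmap_fin_ge_at0 d1, dmap_fin_ge_at0 d2).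
by rewrite mulrDl; apply: le_trans (le_pt x) _;
  rewrite lerD ?(dmap_fin_ge_at d1 x0, dmap_fin_ge_at d2 x0).
Qed.

Lemma dmap_le_scale (c : R) (F G F1 G1 : X -> Y) : 0 <= c ->
  (forall x, dY (F x) (G x) <= c * dY (F1 x) (G1 x)) ->
  (d F G <= c%:E * d F1 G1)%E.
Proof.
rewrite le_eqVlt => /predU1P[<- le_pt|c_gt0 le_pt].
  have le0 x : dY (F x) (G x) <= 0 by rewrite -(mul0r (dY (F1 x) (G1 x))).
  by rewrite mul0e; apply: dmap_le_ub => [|x _]; rewrite ?mul0r le0.
have [->|] := eqVneq (d F1 G1) +oo%E; first by rewrite gt0_muley ?lte_fin ?leey.
rewrite -ltey => /dmap_fineK d1; rewrite d1 -EFinM.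
apply: dmap_le_ub => [|x x0].
  exact: le_trans (le_pt 0) (ler_wpM2l (ltW c_gt0) (dmap_fin_ge_at0 d1)).
by rewrite -mulrA; apply: le_trans (le_pt x) (ler_wpM2l (ltW c_gt0) _); apply: dmap_fin_ge_at.
Qed.

Lemma dmap_triangle (F G H : X -> Y) : (d F H <= d F G + d G H)%E.
Proof. by case: dY_metric => _ _ _ tri; apply: dmap_le_add. Qed.

Lemma dmap_homogeneous (c : R) (a : K) (F : X -> Y) : 0 <= c ->
    (forall y, dY (a *: y) 0 = c * dY y 0) ->
  d (fun x => a *: F x) O = (c%:E * d F O)%E.
Proof.
move=> c_ge0 dY_homo; apply/le_anti/andP; split.
  by apply: dmap_le_scale => // x; rewrite dY_homo.
have [->|c_neq0] := eqVneq c 0; first by rewrite mul0e dmap_ge0.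
rewrite -[leRHS]mul1e -(divff c_neq0) EFinM -muleA.
apply: lee_wpmul2l; first by rewrite lee_fin.
apply: dmap_le_scale; first by rewrite invr_ge0.
by move=> x; rewrite dY_homo mulrA mulVf // mul1r.
Qed.

Section BoundedMaps.
Hypothesis dY_transl : transl_inv dY.

Local Notation B := (Bd dX dY).

Lemma dY_add0 (y z : Y) : dY (y + z) 0 <= dY y 0 + dY z 0.
Proof.
case: dY_metric => _ _ _ tri; apply: le_trans (tri _ z _) _.
by rewrite -{2}(add0r z) dY_transl.
Qed.

Lemma dmap_addr (F G H : X -> Y) :
  d (fun x => F x + H x) (fun x => G x + H x) = d F G.
Proof. by apply: eq_dmap => x; rewrite dY_transl. Qed.

Lemma Bd0 : B O.
Proof. by rewrite /Bd /= dmapxx ltry. Qed.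

Lemma BdD (F G : X -> Y) : B F -> B G -> B (fun x => F x + G x).
Proof.
move=> BF BG; apply: le_lt_trans _ (lte_add_pinfty BF BG).
by apply: dmap_le_add => x; apply: dY_add0.
Qed.

Lemma BdZ (a : K) (F : X -> Y) : scale_bounded dY -> B F -> B (fun x => a *: F x).
Proof.
move=> dY_scale BF; have [C C_gt0 le_C] := dY_scale a.
have C_ge0 := ltW C_gt0.
apply: le_lt_trans _ (lte_mul_pinfty (x := C%:E) _ _ BF); rewrite ?lee_fin //.
exact: dmap_le_scale.
Qed.

Lemma Bd_dmap_lt_pinfty (F G : X -> Y) : B F -> B G -> (d F G < +oo)%E.
Proof.
move=> BF BG; apply: le_lt_trans (dmap_triangle F O G) _.
by rewrite lte_add_pinfty // dmapC.
Qed.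

End BoundedMaps.
End MapDistance.

Lemma theorem10_for_absK_ge0 (R : realType) (K : pzRingType) (absK : K -> R) :
  (forall a, 0 <= absK a) -> theorem10_for absK.
Proof.
move=> absK_ge0 X Y dX dY [dX_metric _ _] [dY_metric _ _] dY_transl dY_scale B d.
rewrite {}/B {}/d; split.
- by split; [exact: Bd0 | exact: BdD | move=> a F; exact: BdZ].
- split=> [F G BF BG|F G _ _|F G _ _|F G _ _|F G H _ _ _].
  + by rewrite ge0_fin_numE ?dmap_ge0 ?Bd_dmap_lt_pinfty.
  + exact: dmap_ge0.
  + by split=> [|->]; [exact: dmap_eq0 | exact: dmapxx].
  + exact: dmapC.
  + exact: dmap_triangle.
- by move=> F G H _ _ _; apply: dmap_addr.
move=> NY [_ _ NY_scale _] dY_NY; split=> [F _|F BF|a F BF|F G BF BG].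
- exact/fine_ge0/dmap_ge0.
- by move=> /eqP; rewrite fine_eq0 ?ge0_fin_numE ?dmap_ge0 // => /eqP; apply: dmap_eq0.
- have dY_homo y : dY (a *: y) 0 = absK a * dY y 0 by rewrite !dY_NY !subr0 NY_scale.
  (* [a *: F] is the pointwise scaling of the function space [X -> Y] *)
  rewrite (_ : dmap _ _ _ _ = dmap dX dY (fun x => a *: F x) (fun=> 0)) //.
  rewrite (dmap_homogeneous dX_metric dY_metric F (absK_ge0 a) dY_homo).
  by rewrite (dmap_fineK dY_metric BF).
- rewrite -lee_fin EFinD -!(dmap_fineK dY_metric) ?BdD //.
  by apply: (dmap_le_add dX_metric dY_metric) => x; apply: dY_add0.
Qed.

Lemma normc_ge0 (R : realType) (z : R[i]) : 0 <= Normc.normc z.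
Proof. by case: z => a b /=; apply: sqrtr_ge0. Qed.

Theorem theorem10 (R : realType) :
  theorem10_for (K := R) (Num.norm : R -> R) /\
  theorem10_for (K := R[i]) (@Normc.normc R).
Proof. by split; apply: theorem10_for_absK_ge0; [exact: normr_ge0 | exact: normc_ge0]. Qed.
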